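(* Let $G$ be a connected simple graph without bridges whose edge set is identified with $[d+1]$, let $B_1,\dots,B_n$ be the bases (spanning trees) of its graphic matroid, all of cardinality $k$, and let $P=\operatorname{tconv}(V)$ with $V=(-e_{B_1},\dots,-e_{B_n})$. Then the cornered hull of $P$ is the tropical standard simplex $\Delta^d=\operatorname{tconv}\{-e_1,\dots,-e_{d+1}\}$, and the $i$-th corner of $P$ is $c_i(V)=e_i$ (as a point of $\mathbb{T}^d$). Moreover $\operatorname{type}_V(e_i)=(T_1,\dots,T_{d+1})$ with $$T_j=\begin{cases}[n] & \text{if } j=i,\\ \{l\in[n]: j\in B_l \text{ and } i\notin B_l\} & \text{otherwise.}\end{cases}$$
   Context: Tropical arithmetic is min-plus: $a\oplus b=\min(a,b)$, $a\odot b=a+b$; $\mathbb{T}^d=\mathbb{R}^{d+1}/\mathbb{R}(1,\dots,1)$; $\operatorname{tconv}\{v_1,\dots,v_n\}=\{\bigoplus_l\lambda_l\odot v_l:\lambda_l\in\mathbb{R}\}$; $e_B=\sum_{i\in B}e_i$. For $m\in[d+1]$ let $\bar S_m=\{\xi\in\mathbb{T}^d:\xi_m=\min_i\xi_i\}$. The $m$-th corner of $\operatorname{tconv}(v_1,\dots,v_n)$ is $c_m(V)=\bigoplus_l(-v_{l,m})\odot v_l$, the $m$-th cornered halfspace is $c_m(V)+\bar S_m$, and the cornered hull is the intersection of all $d+1$ cornered halfspaces. For $V=(v_1,\dots,v_n)$ and $x\in\mathbb{T}^d$, $\operatorname{type}_V(x)=(T_1,\dots,T_{d+1})$ with $T_m=\{l\in[n]:v_l\in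 x+\bar S_m\}$. *)

From mathcomp Require Import all_boot all_order all_algebra.
Set Implicit Arguments. Unset Strict Implicit. Unset Printing Implicit Defensive.
Import Order.TTheory GRing.Theory Num.Theory.
Local Open Scope ring_scope.

(* A graph on the finite vertex type V whose edge set is identified with
   [d+1] = 'I_(d.+1); [ends e] is the set of endpoints of edge e. *)

Definition simple_graph (V : finType) (d : nat) (ends : 'I_d.+1 -> {set V}) :=
  (forall e, #|ends e| = 2%N) /\ injective ends.

Definition adjE (V : finType) (d : nat) (ends : 'I_d.+1 -> {set V})
    (E : {set 'I_d.+1}) : rel V :=
  fun u v => [exists e in E, (u \in ends e) && (v \in ends e) && (u != v)].

Definition connectedE (V : finType) (d : nat) (ends : 'I_d.+1 -> {set V})
    (E : {set 'I_d.+1}) :=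
  forall u v : V, connect (adjE ends E) u v.

Definition connected_graph (V : finType) (d : nat) (ends : 'I_d.+1 -> {set V}) :=
  connectedE ends setT.

Definition is_bridge (V : finType) (d : nat) (ends : 'I_d.+1 -> {set V})
    (e : 'I_d.+1) := ~ connectedE ends (setT :\ e).

Definition bridgeless (V : finType) (d : nat) (ends : 'I_d.+1 -> {set V}) :=
  forall e, ~ is_bridge ends e.

Definition acyclicE (V : finType) (d : nat) (ends : 'I_d.+1 -> {set V})
    (E : {set 'I_d.+1}) :=
  forall e, e \in E -> forall u v, u \in ends e -> v \in ends e -> u != v ->
    ~~ connect (adjE ends (E :\ e)) u v.

(* spanning tree = basis of the graphic matroid of a connected graph *)
Definition spanning_tree (V : finType) (d : nat) (ends : 'I_d.+1 -> {set V})
    (E : {set 'I_d.+1}) :=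
  connectedE ends E /\ acyclicE ends E.

(* Points of T^d are represented by vectors 'I_(d.+1) -> R; two
   representatives are equal in T^d iff they differ by a constant. *)

Definition teq (R : realFieldType) (d : nat) (x y : 'I_d.+1 -> R) :=
  exists c : R, forall i, x i = y i + c.

(* minimum of a finite sequence (0 for the empty one, never used) *)
Definition minseq (R : realFieldType) (s : seq R) : R :=
  if s is a :: s' then foldr Num.min a s' else 0.

Definition tsum (R : realFieldType) (n : nat) (f : 'I_n -> R) : R :=
  minseq [seq f l | l <- enum 'I_n].

Definition tcomb (R : realFieldType) (d n : nat) (lam : 'I_n -> R)
    (v : 'I_n -> 'I_d.+1 -> R) : 'I_d.+1 -> R :=
  fun i => tsum (fun l => lam l + v l i).

Definition tconv (R : realFieldType) (d n : nat) (v : 'I_n -> 'I_d.+1 -> R)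
    (x : 'I_d.+1 -> R) :=
  exists lam : 'I_n -> R, teq x (tcomb lam v).

Definition inSbar (R : realFieldType) (d : nat) (m : 'I_d.+1)
    (xi : 'I_d.+1 -> R) := forall i, xi m <= xi i.

Definition in_shifted_Sbar (R : realFieldType) (d : nat) (x : 'I_d.+1 -> R)
    (m : 'I_d.+1) (y : 'I_d.+1 -> R) := inSbar m (fun i => y i - x i).

Definition corner (R : realFieldType) (d n : nat) (v : 'I_n -> 'I_d.+1 -> R)
    (m : 'I_d.+1) : 'I_d.+1 -> R :=
  tcomb (fun l => - v l m) v.

Definition cornered_hull (R : realFieldType) (d n : nat)
    (v : 'I_n -> 'I_d.+1 -> R) (x : 'I_d.+1 -> R) :=
  forall m, in_shifted_Sbar (corner v m) m x.

Definition ttype (R : realFieldType) (d n : nat) (v : 'I_n -> 'I_d.+1 -> R)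
    (x : 'I_d.+1 -> R) : 'I_d.+1 -> 'I_n -> Prop :=
  fun m l => in_shifted_Sbar x m (v l).
(* ttype v x m l  <->  l \in T_m *)

Definition eB (R : realFieldType) (d : nat) (B : {set 'I_d.+1}) : 'I_d.+1 -> R :=
  fun i => if i \in B then 1 else 0.

Definition unitv (R : realFieldType) (d : nat) (i : 'I_d.+1) : 'I_d.+1 -> R :=
  eB R [set i].

(* In a bridgeless connected graph, for any two distinct edges i and m the
   graph minus m is still connected, so it has a spanning tree through i; that
   tree is a basis containing i but not m.  Hence the i-th coordinate of the
   corner c_m(V) = min_l (e_{B_l,m} - e_{B_l,i}) is -1 for i <> m and 0 for
   i = m, i.e. c_m(V) = e_m in T^d.  The cornered halfspaces then cut out the
   points whose coordinates spread by at most 1, which is exactly the tropical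
   standard simplex, and the types of the corners are read off coordinatewise. *)
From mathcomp Require Import all_boot all_order all_algebra.
From mathcomp Require Import lra.
Set Implicit Arguments. Unset Strict Implicit. Unset Printing Implicit Defensive.
Import Order.TTheory GRing.Theory Num.Theory.

Lemma card2_pairs (V : finType) (S : {set V}) a b x y :
  #|S| = 2 -> a \in S -> b \in S -> a != b -> x \in S -> y \in S -> x != y ->
  (x == a) && (y == b) || (x == b) && (y == a).
Proof.
move/eqP/cards2P => [p [q [Hpq ->]]].
rewrite !inE => /orP[]/eqP-> /orP[]/eqP-> //; rewrite ?eqxx //= => _;
  (move=> /orP[]/eqP-> /orP[]/eqP->; rewrite ?eqxx ?(eq_sym q p) ?Hpq ?orbT //=).
Qed.

Section SpanningTrees.

Variables (V : finType) (d : nat) (ends : 'I_d.+1 -> {set V}).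
Hypothesis card_ends : forall e, #|ends e| = 2.

Lemma adjE_sym E : symmetric (adjE ends E).
Proof.
move=> x y; apply/existsP/existsP => -[e /andP[HE /andP[/andP[Ha Hb] Hc]]];
  exists e; by rewrite HE Ha Hb eq_sym Hc.
Qed.

Definition on_cycle (F : {set 'I_d.+1}) (g : 'I_d.+1) :=
  exists a b, [/\ a \in ends g, b \in ends g, a != b &
                  connect (adjE ends (F :\ g)) a b].

Lemma connect_delete_on_cycle (F : {set 'I_d.+1}) f x y :
  on_cycle F f -> connect (adjE ends F) x y -> connect (adjE ends (F :\ f)) x y.
Proof.
move=> [a [b [Ha Hb Hab Cab]]].
apply: connect_sub => {}x {}y /existsP[e /andP[HE /andP[/andP[Hx Hy] Hxy]]].
have [Eef|Nef] := eqVneq e f; last first.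
  by apply: connect1; apply/existsP; exists e; rewrite !inE Nef HE Hx Hy Hxy.
subst e; case/orP: (card2_pairs (card_ends f) Ha Hb Hab Hx Hy Hxy) => /andP[/eqP-> /eqP->] //.
by rewrite sym_connect_sym //; apply: adjE_sym.
Qed.

(* The first edge g = {u, w} of a simple path from u to v avoiding i closes,
   together with i, a cycle through g. *)
Lemma on_cycle_other_edge (F : {set 'I_d.+1}) i : i \in F -> on_cycle F i ->
  exists2 g, g \in F & g != i /\ on_cycle F g.
Proof.
move=> Hi [u [v [Hu Hv Huv /connectP[p Hp Hl]]]].
case: (shortenP Hp) Hl => p' Hp' Hun _ Hl.
case: p' Hp' Hun Hl => [/= _ _ Hl|w rest]; first by rewrite Hl eqxx in Huv.
rewrite /= => /andP[/existsP[g /andP[HgE /andP[/andP[Hug Hwg] Huw]]] Hpath].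
rewrite inE negb_or => /andP[/andP[_ u_rest] _] Hl.
move: HgE; rewrite !inE => /andP[Hgi HgF].
exists g => //; split => //; exists u, w; split => //.
have path_rest : path (adjE ends (F :\ g)) w rest.
  apply: (sub_in_path (P := predC1 u)); last exact: Hpath.
    move=> x y; rewrite !inE => Hxu Hyu /existsP[e /andP[HE /andP[/andP[Hx Hy] Hxy]]].
    have [Eeg|Neg] := eqVneq e g.
      subst e; case/orP: (card2_pairs (card_ends g) Hug Hwg Huw Hx Hy Hxy).
        by move=> /andP[/eqP Ex _]; rewrite Ex eqxx in Hxu.
      by move=> /andP[_ /eqP Ey]; rewrite Ey eqxx in Hyu.
    apply/existsP; exists e; move: HE; rewrite !inE => /andP[_ ->].
    by rewrite Neg Hx Hy Hxy.
  rewrite /= eq_sym Huw /=; apply/allP => z Hz /=.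
  by apply/negP => /eqP Ez; rewrite -Ez Hz in u_rest.
have Cwv : connect (adjE ends (F :\ g)) w v by apply/connectP; exists rest.
rewrite sym_connect_sym; last exact: adjE_sym.
apply: connect_trans Cwv _; apply: connect1; apply/existsP; exists i.
by rewrite !inE eq_sym Hgi Hi Hv Hu eq_sym Huv.
Qed.

(* A smallest connected F with i \in F \subset E cannot contain a cycle:
   deleting an edge of the cycle other than i would keep it connected. *)
Lemma spanning_tree_through (E : {set 'I_d.+1}) i : connectedE ends E -> i \in E ->
  exists F : {set 'I_d.+1}, [/\ F \subset E, i \in F & spanning_tree ends F].
Proof.
move=> CE iE.
pose P (F : {set 'I_d.+1}) := [&& F \subset E, i \in F &
   [forall u, forall v, connect (adjE ends F) u v]].
have PE : P E.
  by rewrite /P subxx iE /=; apply/forallP => u; apply/forallP => v; apply: CE.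
case: (arg_minnP (fun F : {set 'I_d.+1} => #|F|) PE) => F /and3P[FsE iF /forallP Fc] Fmin.
have FC : connectedE ends F by move=> u v; exact: (forallP (Fc u) v).
exists F; split => //; split => // f Hf u v Hu Hv Huv; apply/negP => C.
have f_cyc : on_cycle F f by exists u, v.
have [g gF [gi g_cyc]] : exists2 g, g \in F & g != i /\ on_cycle F g.
  have [Efi|Nfi] := eqVneq f i; last by exists f.
  by rewrite Efi in Hf f_cyc; exact: on_cycle_other_edge.
have PFg : P (F :\ g).
  rewrite /P !inE eq_sym gi iF /= (subset_trans (subD1set F g) FsE) /=.
  apply/forallP => x; apply/forallP => y.
  exact: connect_delete_on_cycle g_cyc (FC x y).
by have := Fmin _ PFg; rewrite (cardsD1 g F) gF add1n ltnn.
Qed.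

Lemma bridgeless_bases_separate n (B : 'I_n -> {set 'I_d.+1}) i m :
  bridgeless ends -> (forall E, spanning_tree ends E <-> exists l, B l = E) ->
  i != m -> exists l, (i \in B l) && (m \notin B l).
Proof.
move=> Hbr Hbases Nim.
have Cm : connectedE ends (setT :\ m).
  move=> u w; apply/negPn/negP => nC; apply: (Hbr m) => C.
  by rewrite C in nC.
have iE : i \in setT :\ m by rewrite !inE Nim.
have [F [FsE iF /Hbases [l El]]] := spanning_tree_through Cm iE.
exists l; rewrite El iF /=; apply/negP => mF.
by move: (subsetP FsE _ mF); rewrite !inE eqxx.
Qed.

End SpanningTrees.

Local Open Scope ring_scope.

Section TropicalSums.

Variable R : realFieldType.

Lemma minseq_spec (a : R) s :
  (forall x, x \in a :: s -> minseq (a :: s) <= x) /\ minseq (a :: s) \in a :: s.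
Proof.
rewrite /=; elim: s => [|b s [IH1 IH2]] /=.
  by split; [move=> x; rewrite inE => /eqP->|rewrite inE].
split.
  move=> x; rewrite !inE => /or3P[/eqP->|/eqP->|Hx].
  - by rewrite ge_min IH1 ?mem_head ?orbT.
  - by rewrite ge_min lexx.
  - by rewrite ge_min IH1 ?orbT // inE Hx orbT.
rewrite /Num.min; case: ifP => _; first by rewrite !inE eqxx orbT.
by move: IH2; rewrite !inE => /orP[->|->]; rewrite ?orbT.
Qed.

Lemma tsum_le n (f : 'I_n -> R) l : tsum f <= f l.
Proof.
rewrite /tsum; have : f l \in [seq f l | l <- enum 'I_n].
  by apply: map_f; rewrite mem_enum.
case: [seq _ | _ <- _] => [//|a s Hin].
by case: (minseq_spec a s) => H _; apply: H.
Qed.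

Lemma tsum_attained n (f : 'I_n -> R) (l0 : 'I_n) : exists l, tsum f = f l.
Proof.
rewrite /tsum; have : f l0 \in [seq f l | l <- enum 'I_n].
  by apply: map_f; rewrite mem_enum.
case E: [seq _ | _ <- _] => [|a s] Hin; first by rewrite in_nil in Hin.
by case: (minseq_spec a s) => _; rewrite -E => /mapP[l _ ->]; exists l.
Qed.

Lemma tsum_eq_attained n (f : 'I_n -> R) c :
  (forall l, c <= f l) -> (exists l, f l = c) -> tsum f = c.
Proof.
move=> Hlb [l0 Hl0]; apply/eqP; rewrite eq_le -{1}Hl0 tsum_le /=.
by have [l ->] := tsum_attained f l0.
Qed.

(* Needs no witness l: for n = 0, [tsum] returns the junk value 0. *)
Lemma tsum_eq0 n (f : 'I_n -> R) : (forall l, f l = 0) -> tsum f = 0.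
Proof.
move=> H; rewrite /tsum; case: (enum 'I_n) => [//|a s] /=.
by rewrite H; elim: s => [//|b s IH] /=; rewrite IH H /Num.min ltxx.
Qed.

End TropicalSums.

Section TropicalSimplex.

Variables (R : realFieldType) (d : nat).

Lemma tconv_neg_unitvP (x : 'I_d.+1 -> R) :
  tconv (fun i j => - unitv R i j) x <-> forall i j, x i <= x j + 1.
Proof.
rewrite /unitv /eB; split.
  move=> [lam [c Hx]] i j; rewrite !Hx /tcomb.
  have [l ->] := tsum_attained (fun l => lam l + - (if j \in [set l] then 1 else 0)) j.
  have := tsum_le (fun l => lam l + - (if i \in [set l] then 1 else 0)) l.
  by rewrite !inE; case: (i == l); case: (j == l); lra.
move=> Hx; exists (fun l => x l + 1), 0 => j; rewrite addr0 /tcomb.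
symmetry; apply: tsum_eq_attained; last by exists j; rewrite inE eqxx; lra.
move=> l; rewrite inE; have [->|_] := eqVneq j l; first lra.
by have := Hx j l; lra.
Qed.

Lemma cornered_hull_unit_corners n (v : 'I_n -> 'I_d.+1 -> R) x :
  (forall m i, corner v m i = if i == m then 0 else -1) ->
  cornered_hull v x <-> forall i j, x i <= x j + 1.
Proof.
move=> Hc; split.
  move=> Hx i j; have [->|Nij] := eqVneq i j; first lra.
  by have := Hx i j; rewrite /in_shifted_Sbar /inSbar !Hc eqxx eq_sym (negbTE Nij); lra.
move=> Hx m i; rewrite /in_shifted_Sbar /inSbar /= !Hc eqxx.
by have [->|_] := eqVneq i m; [lra | have := Hx m i; lra].
Qed.

Lemma corner_neg_eB n (B : 'I_n -> {set 'I_d.+1}) :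
  (forall i m, i != m -> exists l, (i \in B l) && (m \notin B l)) ->
  forall m i, corner (fun l i => - eB R (B l) i) m i = if i == m then 0 else -1.
Proof.
move=> Hsep m i; rewrite /corner /tcomb; have [->|Nim] := eqVneq i m.
  by apply: tsum_eq0 => l; rewrite opprK addrN.
apply: tsum_eq_attained.
  by move=> l; rewrite opprK /eB; case: (m \in B l); case: (i \in B l); lra.
have [l /andP[iB mB]] := Hsep i m Nim.
by exists l; rewrite opprK /eB iB (negbTE mB); lra.
Qed.

Lemma ttype_neg_eB_unitv n (B : 'I_n -> {set 'I_d.+1}) i j l :
  ttype (fun l i => - eB R (B l) i) (unitv R i) j l <->
  (if j == i then True else (j \in B l) && (i \notin B l)).
Proof.
rewrite /ttype /in_shifted_Sbar /inSbar /unitv /eB.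
have [->|Nji] := eqVneq j i.
  split => // _ k; rewrite !inE eqxx.
  have [->|_] := eqVneq k i; first by rewrite lexx.
  by case: (i \in B l); case: (k \in B l); lra.
split.
  move=> H; have := H i; rewrite !inE eqxx (negbTE Nji).
  by case: (j \in B l); case: (i \in B l); lra.
move=> /andP[jB iB] k; rewrite !inE (negbTE Nji) jB.
have [->|_] := eqVneq k i; first by rewrite (negbTE iB); lra.
by case: (k \in B l); lra.
Qed.

End TropicalSimplex.

Theorem mainTheorem6 (R : realFieldType) (Vt : finType) (d : nat)
    (ends : 'I_d.+1 -> {set Vt}) (n k : nat) (B : 'I_n -> {set 'I_d.+1}) :
  simple_graph ends -> connected_graph ends -> bridgeless ends ->
  injective B ->
  (forall E, spanning_tree ends E <-> exists l, B l = E) ->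
  (forall l, #|B l| = k) ->
  let v : 'I_n -> 'I_d.+1 -> R := fun l i => - eB R (B l) i in
  (forall x, cornered_hull v x <-> tconv (fun i : 'I_d.+1 => fun j => - unitv R i j) x)
  /\ (forall i, teq (corner v i) (unitv R i))
  /\ (forall i j l, ttype v (unitv R i) j l <->
        (if j == i then True
         else (j \in B l) && (i \notin B l))).
Proof.
move=> [card_ends _] _ Hbr _ Hbases _ v.
have Hcorner := corner_neg_eB R (fun i m => bridgeless_bases_separate card_ends Hbr Hbases).
split; [|split].
- by move=> x; rewrite tconv_neg_unitvP; exact: cornered_hull_unit_corners.
- move=> i; exists (-1) => j; rewrite Hcorner /unitv /eB inE.
  by case: (j == i); lra.
- exact: ttype_neg_eB_unitv.
Qed.
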